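(* If $A,B\in\mathcal{D}$ and $d(A)<d(B)$, then there exists $D\in\mathcal{D}$ such that $A\subseteq D\subseteq A\cup B$ and $d(D)=d(B)$.
   Context: $\mathbb{N}=\{1,2,3,\dots\}$. For $A\subseteq\mathbb{N}$ let $A(n)=|A\cap[1,n]|$. Let $\mathcal{D}$ be the collection of all $A\subseteq\mathbb{N}$ for which the asymptotic density $d(A)=\lim_{n\to\infty}\frac{A(n)}{n}$ exists. *)

(* Subsets of N = {1,2,3,...} are represented by their
   (boolean) characteristic functions nat -> bool; only values at n >= 1
   matter (the value at 0 is ignored by the counting function). *)
From Stdlib Require Import Reals Lra Lia.
Open Scope R_scope.

Fixpoint count_upto (A : nat -> bool) (n : nat) : nat :=
  match n with
  | O => O
  | S m => (count_upto A m + (if A (S m) then 1 else 0))%nat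
  end.

Definition has_density (A : nat -> bool) (l : R) : Prop :=
  Un_cv (fun n => INR (count_upto A n) / INR n) l.

Definition subset_pos (A B : nat -> bool) : Prop :=
  forall n : nat, (1 <= n)%nat -> A n = true -> B n = true.

(* Greedy construction: put n into D if n is in A, or if n is in B while D is
   still below the target, i.e. D(n-1) < d(B) n.  Once D(n) exceeds d(B) n it can
   only grow with A, whose density is below d(B); below d(B) n it grows at least
   as fast as B, whose density is d(B).  Tracking the last time each regime was
   entered gives d(B) n - o(n) <= D(n) <= d(B) n + o(n). *)
From Stdlib Require Import Reals Lra Lia.
Open Scope R_scope.

Lemma has_density_bounds (A : nat -> bool) (l e : R) :
  has_density A l -> 0 < e ->
  exists N, forall n, (N <= n)%nat ->
    (l - e) * INR n < INR (count_upto A n) < (l + e) * INR n.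
Proof.
  intros HA He. destruct (HA e He) as [N HN]. exists (S N). intros n Hn.
  assert (Hn0 : 0 < INR n) by (apply lt_0_INR; lia).
  destruct (Rabs_def2 _ _ (HN n ltac:(lia))) as [Hlo Hhi].
  set (q := INR (count_upto A n) / INR n) in *.
  assert (Hq : INR (count_upto A n) = q * INR n) by (unfold q; field; lra).
  rewrite Hq. split; nra.
Qed.

Lemma Un_cv_ratio_of_bounds (x : nat -> R) (l : R) :
  (forall e, 0 < e -> exists N, forall n, (N <= n)%nat ->
     (l - e) * INR n <= x n <= (l + e) * INR n) ->
  Un_cv (fun n => x n / INR n) l.
Proof.
  intros Hx e He. destruct (Hx (e / 2) ltac:(lra)) as [N HN].
  exists (S N). intros n Hn. unfold R_dist.
  assert (Hn0 : 0 < INR n) by (apply lt_0_INR; lia).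
  destruct (HN n ltac:(lia)) as [Hlo Hhi].
  set (q := x n / INR n).
  assert (Hq : x n = q * INR n) by (unfold q; field; lra).
  rewrite Hq in Hlo, Hhi. apply Rabs_def1; nra.
Qed.

(* If [d] can only outgrow [a] while staying below [s k + c], then after time [N]
   it exceeds the line [s k] by at most [K] plus the growth of [a] since the
   last time [m] it was below that line. *)
Lemma stepwise_upper_bound (a d : nat -> R) (s c K : R) (N : nat) :
  (forall n, d (S n) - d n <= a (S n) - a n \/ d (S n) <= s * INR (S n) + c) ->
  c <= K -> d N <= K + s * INR N ->
  forall n, (N <= n)%nat ->
    exists m, (N <= m <= n)%nat /\ d n <= K + s * INR m + (a n - a m).
Proof.
  intros Hstep HcK HN n Hn. induction Hn as [|n Hn IH].
  - exists N. split; [lia | lra].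
  - destruct IH as [m [Hm Hd]]. destruct (Hstep n) as [H | H].
    + exists m. split; [lia | lra].
    + exists (S n). split; [lia | lra].
Qed.

Section Greedy.
Variables (A B : nat -> bool) (dB : R).

Definition greedy_admits (c n : nat) : bool :=
  A n || (B n && (if Rlt_dec (INR c) (dB * INR n) then true else false)).

Fixpoint greedy_count (n : nat) : nat :=
  match n with
  | O => O
  | S m => (greedy_count m + (if greedy_admits (greedy_count m) (S m) then 1 else 0))%nat
  end.

Definition greedy_set (n : nat) : bool :=
  match n with
  | O => false
  | S m => greedy_admits (greedy_count m) (S m)
  end.

Lemma count_upto_greedy_set (n : nat) : count_upto greedy_set n = greedy_count n.
Proof. induction n as [|n IH]; simpl; auto. Qed.

Lemma subset_pos_greedy_set_l : subset_pos A greedy_set.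
Proof.
  intros [|n] Hn HA; [lia |]. simpl. unfold greedy_admits. now rewrite HA.
Qed.

Lemma subset_pos_greedy_set_r : subset_pos greedy_set (fun n => orb (A n) (B n)).
Proof.
  intros [|n] Hn HD; [lia |]. simpl in HD. unfold greedy_admits in HD.
  destruct (A (S n)), (B (S n)); auto.
Qed.

Lemma greedy_count_step_upper (n : nat) :
  INR (greedy_count (S n)) - INR (greedy_count n)
    <= INR (count_upto A (S n)) - INR (count_upto A n)
  \/ INR (greedy_count (S n)) <= dB * INR (S n) + 1.
Proof.
  simpl. rewrite !plus_INR. unfold greedy_admits.
  destruct (A (S n)), (B (S n)), (Rlt_dec _ _); simpl in *;
    first [left; lra | right; lra].
Qed.

Lemma greedy_count_step_lower (n : nat) :
  INR (count_upto B (S n)) - INR (count_upto B n)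
    <= INR (greedy_count (S n)) - INR (greedy_count n)
  \/ dB * INR (S n) <= INR (greedy_count (S n)).
Proof.
  simpl. rewrite !plus_INR. unfold greedy_admits.
  destruct (A (S n)), (B (S n)), (Rlt_dec _ _); simpl in *;
    first [left; lra | right; lra].
Qed.

Lemma greedy_count_eventually_le (dA : R) :
  has_density A dA -> dA <= dB ->
  forall e, 0 < e -> exists N, forall n, (N <= n)%nat ->
    INR (greedy_count n) <= (dB + e) * INR n.
Proof.
  intros HA Hle e He.
  destruct (has_density_bounds A dA (e / 3) HA ltac:(lra)) as [N HN].
  set (K := Rmax 1 (INR (greedy_count N) - dB * INR N)).
  assert (HK1 : 1 <= K) by apply Rmax_l.
  assert (HKN : INR (greedy_count N) <= K + dB * INR N)
    by (generalize (Rmax_r 1 (INR (greedy_count N) - dB * INR N)); unfold K; lra).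
  destruct (INR_archimed (e / 3) K ltac:(lra)) as [M HM].
  exists (Nat.max N M). intros n Hn.
  destruct (stepwise_upper_bound (fun k => INR (count_upto A k))
              (fun k => INR (greedy_count k)) dB 1 K N
              greedy_count_step_upper HK1 HKN n ltac:(lia)) as [m [Hm Hd]].
  assert (HMn : INR M <= INR n) by (apply le_INR; lia).
  assert (Hmn : INR m <= INR n) by (apply le_INR; lia).
  assert (Hm0 : 0 <= INR m) by apply pos_INR.
  destruct (HN n ltac:(lia)) as [_ Han]. destruct (HN m ltac:(lia)) as [Ham _].
  nra.
Qed.

Lemma greedy_count_eventually_ge :
  has_density B dB ->
  forall e, 0 < e -> exists N, forall n, (N <= n)%nat ->
    (dB - e) * INR n <= INR (greedy_count n).
Proof.
  intros HB e He.
  destruct (has_density_bounds B dB (e / 3) HB ltac:(lra)) as [N HN].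
  set (K := Rmax 0 (dB * INR N - INR (greedy_count N))).
  assert (HK0 : 0 <= K) by apply Rmax_l.
  assert (HKN : - INR (greedy_count N) <= K + - dB * INR N)
    by (generalize (Rmax_r 0 (dB * INR N - INR (greedy_count N))); unfold K; lra).
  destruct (INR_archimed (e / 3) K ltac:(lra)) as [M HM].
  exists (Nat.max N M). intros n Hn.
  (* the lower bound is the upper bound for the negated sequences *)
  assert (Hstep : forall k,
    - INR (greedy_count (S k)) - - INR (greedy_count k)
      <= - INR (count_upto B (S k)) - - INR (count_upto B k)
    \/ - INR (greedy_count (S k)) <= - dB * INR (S k) + 0).
  { intro k. destruct (greedy_count_step_lower k); [left | right]; lra. }
  destruct (stepwise_upper_bound (fun k => - INR (count_upto B k))
              (fun k => - INR (greedy_count k)) (- dB) 0 K N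
              Hstep HK0 HKN n ltac:(lia)) as [m [Hm Hd]].
  assert (HMn : INR M <= INR n) by (apply le_INR; lia).
  assert (Hmn : INR m <= INR n) by (apply le_INR; lia).
  assert (Hm0 : 0 <= INR m) by apply pos_INR.
  destruct (HN n ltac:(lia)) as [Hbn _]. destruct (HN m ltac:(lia)) as [_ Hbm].
  nra.
Qed.

Lemma has_density_greedy_set (dA : R) :
  has_density A dA -> has_density B dB -> dA <= dB -> has_density greedy_set dB.
Proof.
  intros HA HB Hle. unfold has_density.
  apply Un_cv_ratio_of_bounds. intros e He.
  destruct (greedy_count_eventually_le dA HA Hle e He) as [N1 H1].
  destruct (greedy_count_eventually_ge HB e He) as [N2 H2].
  exists (Nat.max N1 N2). intros n Hn. rewrite count_upto_greedy_set.
  split; [apply H2 | apply H1]; lia.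
Qed.

End Greedy.

Theorem corollary3p6 (A B : nat -> bool) (dA dB : R) :
  has_density A dA -> has_density B dB -> dA < dB ->
  exists (D : nat -> bool),
    has_density D dB /\
    subset_pos A D /\
    subset_pos D (fun n => orb (A n) (B n)).
Proof.
  intros HA HB Hlt. exists (greedy_set A B dB). split; [| split].
  - apply (has_density_greedy_set A B dB dA); auto; lra.
  - apply subset_pos_greedy_set_l.
  - apply subset_pos_greedy_set_r.
Qed.
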